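(* Fix $\epsilon_2>0$ and $(u_\pm,v_\pm)$ with $v_\pm>0$ and $u_->u_++2\epsilon_2$. For $0<\epsilon_1$ small, let $(u_*^{\epsilon_2},v_*^{\epsilon_2})$ (depending on $\epsilon_1$) be the intermediate state of the two-shock Riemann solution of the perturbed Brio system with data $(u_\pm,v_\pm)$. Then $\lim_{\epsilon_1\to0}v_*^{\epsilon_2}=+\infty$.
   Context: Perturbed Brio system: $u_t+(\tfrac12u^2+\tfrac12\epsilon_1v^2)_x=0$, $v_t+(uv-\epsilon_2v)_x=0$, $\epsilon_1,\epsilon_2>0$, $v>0$. The two-shock intermediate state $(u_*,v_* )$ satisfies $v_*>\max(v_-,v_+)$, $u_+<u_*<u_-$, $$u_*=u_-+(v_*-v_-)\frac{\epsilon_2-\sqrt{\epsilon_2^2+4\epsilon_1(v_*+v_-)^2}}{v_*+v_-},\qquad u_+=u_*+(v_+-v_* )\frac{\epsilon_2+\sqrt{\epsilon_2^2+4\epsilon_1(v_*+v_+)^2}}{v_*+v_+}.$$ *)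

From Stdlib Require Import Reals Lra.
Open Scope R_scope.

Definition intermediate_state (e1 e2 um vm up vp us vs : R) : Prop :=
  Rmax vm vp < vs /\ up < us /\ us < um /\
  us = um + (vs - vm) * (e2 - sqrt (e2 ^ 2 + 4 * e1 * (vs + vm) ^ 2)) / (vs + vm) /\
  up = us + (vp - vs) * (e2 + sqrt (e2 ^ 2 + 4 * e1 * (vs + vp) ^ 2)) / (vs + vp).

(* For fixed [v], the two Hugoniot relations give [u_- - u_+] as the sum of
   the two shock jumps.  Expanding [sqrt (e2^2 + 4 e1 X^2) <= e2 + 2 e1 X^2 / e2] shows
   that this sum is at most [2 e2 + O(e1)] uniformly for [v] in a bounded range, so since
   [u_- - u_+ > 2 e2] it cannot be matched at any bounded [v] once [e1] is small: [v_*]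
   escapes to infinity.  For fixed [e1 > 0] the 1-shock jump grows like [2 sqrt e1 v],
   and the intermediate value theorem produces [v_*]. *)
From Stdlib Require Import Reals Lra Ranalysis5.
From Coquelicot Require Import Coquelicot.
Open Scope R_scope.

Lemma sqrt_sqr_plus_ge a b : 0 <= a -> 0 <= b -> a <= sqrt (a ^ 2 + b).
Proof.
  intros Ha Hb. rewrite <- (sqrt_pow2 a) at 1 by exact Ha.
  apply sqrt_le_1_alt. lra.
Qed.

Lemma sqrt_sqr_plus_gt a b : 0 <= a -> 0 < b -> a < sqrt (a ^ 2 + b).
Proof.
  intros Ha Hb. rewrite <- (sqrt_pow2 a) at 1 by exact Ha.
  apply sqrt_lt_1_alt. split; [apply pow_le |]; lra.
Qed.

Lemma sqrt_sqr_plus_le a b : 0 < a -> 0 <= b -> sqrt (a ^ 2 + b) <= a + b / (2 * a).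
Proof.
  intros Ha Hb.
  assert (Hq : 0 <= b / (2 * a)) by (apply Rdiv_le_0_compat; lra).
  assert (Hqa : 2 * a * (b / (2 * a)) = b) by (field; lra).
  rewrite <- (sqrt_pow2 (a + b / (2 * a))) by lra.
  apply sqrt_le_1_alt. nra.
Qed.

Lemma sqrt_mul_sqr_le e X a : 0 <= e -> 0 <= X ->
  2 * sqrt e * X <= sqrt (a ^ 2 + 4 * e * X ^ 2).
Proof.
  intros He HX. rewrite <- (sqrt_pow2 (2 * sqrt e * X)).
  - apply sqrt_le_1_alt. pose proof (sqrt_sqrt e He). pose proof (pow2_ge_0 a). nra.
  - pose proof (sqrt_pos e). nra.
Qed.

Lemma diff_div_sum_bounds v w : 0 < w <= v -> 0 <= (v - w) / (v + w) <= 1.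
Proof.
  intros Hw. split.
  - apply Rdiv_le_0_compat; lra.
  - apply (Rdiv_le_1 (v - w) (v + w)); lra.
Qed.

(* [u_- - u_*] and [u_* - u_+] as functions of [v = v_*], read off the two Hugoniot
   relations defining the intermediate state. *)
Definition shock1_jump (e1 e2 vm v : R) : R :=
  (v - vm) * (sqrt (e2 ^ 2 + 4 * e1 * (v + vm) ^ 2) - e2) / (v + vm).

Definition shock2_jump (e1 e2 vp v : R) : R :=
  (v - vp) * (e2 + sqrt (e2 ^ 2 + 4 * e1 * (v + vp) ^ 2)) / (v + vp).

Definition jump_sum (e1 e2 vm vp v : R) : R := shock1_jump e1 e2 vm v + shock2_jump e1 e2 vp v.

Lemma diff_mul_div_sum v w T : (v - w) * T / (v + w) = (v - w) / (v + w) * T.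
Proof. unfold Rdiv. ring. Qed.

Lemma shock1_jump_le e1 e2 vm v : 0 <= e1 -> 0 < e2 -> 0 < vm <= v ->
  shock1_jump e1 e2 vm v <= 2 * e1 * (v + vm) ^ 2 / e2.
Proof.
  intros He1 He2 Hv. unfold shock1_jump. rewrite diff_mul_div_sum.
  pose proof (diff_div_sum_bounds v vm Hv).
  pose proof (pow2_ge_0 (v + vm)).
  pose proof (sqrt_sqr_plus_ge e2 (4 * e1 * (v + vm) ^ 2) ltac:(lra) ltac:(nra)).
  pose proof (sqrt_sqr_plus_le e2 (4 * e1 * (v + vm) ^ 2) He2 ltac:(nra)).
  replace (4 * e1 * (v + vm) ^ 2 / (2 * e2)) with (2 * e1 * (v + vm) ^ 2 / e2) in * by (field; lra).
  nra.
Qed.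

Lemma shock1_jump_ge e1 e2 vm v : 0 <= e1 -> 0 <= e2 -> 0 < vm <= v ->
  2 * sqrt e1 * (v - vm) - e2 <= shock1_jump e1 e2 vm v.
Proof.
  intros He1 He2 Hv. unfold shock1_jump. rewrite diff_mul_div_sum.
  pose proof (diff_div_sum_bounds v vm Hv).
  pose proof (sqrt_mul_sqr_le e1 (v + vm) e2 He1 ltac:(lra)).
  assert (Hr : (v - vm) / (v + vm) * (v + vm) = v - vm) by (field; lra).
  pose proof (sqrt_pos e1).
  nra.
Qed.

Lemma shock1_jump_pos e1 e2 vm v : 0 < e1 -> 0 <= e2 -> 0 < vm < v ->
  0 < shock1_jump e1 e2 vm v.
Proof.
  intros He1 He2 Hv. unfold shock1_jump.
  assert (0 < 4 * e1 * (v + vm) ^ 2) by (pose proof (pow_lt (v + vm) 2 ltac:(lra)); nra).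
  pose proof (sqrt_sqr_plus_gt e2 (4 * e1 * (v + vm) ^ 2) He2 ltac:(lra)).
  apply Rdiv_lt_0_compat; nra.
Qed.

Lemma shock2_jump_le e1 e2 vp v : 0 <= e1 -> 0 < e2 -> 0 < vp <= v ->
  shock2_jump e1 e2 vp v <= 2 * e2 + 2 * e1 * (v + vp) ^ 2 / e2.
Proof.
  intros He1 He2 Hv. unfold shock2_jump. rewrite diff_mul_div_sum.
  pose proof (diff_div_sum_bounds v vp Hv).
  pose proof (pow2_ge_0 (v + vp)).
  pose proof (sqrt_sqr_plus_ge e2 (4 * e1 * (v + vp) ^ 2) ltac:(lra) ltac:(nra)).
  pose proof (sqrt_sqr_plus_le e2 (4 * e1 * (v + vp) ^ 2) He2 ltac:(nra)).
  replace (4 * e1 * (v + vp) ^ 2 / (2 * e2)) with (2 * e1 * (v + vp) ^ 2 / e2) in * by (field; lra).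
  nra.
Qed.

Lemma shock2_jump_nonneg e1 e2 vp v : 0 <= e1 -> 0 <= e2 -> 0 < vp <= v ->
  0 <= shock2_jump e1 e2 vp v.
Proof.
  intros He1 He2 Hv. unfold shock2_jump. rewrite diff_mul_div_sum.
  pose proof (diff_div_sum_bounds v vp Hv).
  pose proof (sqrt_pos (e2 ^ 2 + 4 * e1 * (v + vp) ^ 2)).
  nra.
Qed.

Lemma shock2_jump_pos e1 e2 vp v : 0 <= e1 -> 0 < e2 -> 0 < vp < v ->
  0 < shock2_jump e1 e2 vp v.
Proof.
  intros He1 He2 Hv. unfold shock2_jump.
  pose proof (sqrt_pos (e2 ^ 2 + 4 * e1 * (v + vp) ^ 2)).
  apply Rdiv_lt_0_compat; nra.
Qed.

Lemma jump_sum_le e1 e2 vm vp v : 0 <= e1 -> 0 < e2 -> 0 < vm <= v -> 0 < vp <= v ->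
  jump_sum e1 e2 vm vp v <= 2 * e2 + 2 * e1 * ((v + vm) ^ 2 + (v + vp) ^ 2) / e2.
Proof.
  intros He1 He2 Hvm Hvp. unfold jump_sum.
  pose proof (shock1_jump_le e1 e2 vm v He1 He2 Hvm).
  pose proof (shock2_jump_le e1 e2 vp v He1 He2 Hvp).
  replace (2 * e1 * ((v + vm) ^ 2 + (v + vp) ^ 2) / e2)
    with (2 * e1 * (v + vm) ^ 2 / e2 + 2 * e1 * (v + vp) ^ 2 / e2) by (field; lra).
  lra.
Qed.

Lemma jump_sum_lt_eventually e2 vm vp c V : 0 < e2 -> 0 < vm -> 0 < vp -> 2 * e2 < c ->
  exists d, 0 < d /\ forall e1 v, 0 < e1 < d -> Rmax vm vp <= v <= V ->
    jump_sum e1 e2 vm vp v < c.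
Proof.
  intros He2 Hvm Hvp Hc.
  set (K := 1 + (V + vm) ^ 2 + (V + vp) ^ 2).
  assert (HK : 0 < K) by (unfold K; pose proof (pow2_ge_0 (V + vm)); pose proof (pow2_ge_0 (V + vp)); lra).
  exists ((c - 2 * e2) * e2 / (2 * K)). split.
  { apply Rdiv_lt_0_compat; nra. }
  intros e1 v He1 Hv.
  pose proof (Rmax_l vm vp). pose proof (Rmax_r vm vp).
  assert (HQ : (v + vm) ^ 2 + (v + vp) ^ 2 <= K) by (unfold K; nra).
  assert (Hsmall : 2 * e1 * K / e2 < c - 2 * e2).
  { apply Rmult_lt_reg_r with (e2 / (2 * K)); [apply Rdiv_lt_0_compat; lra |].
    replace (2 * e1 * K / e2 * (e2 / (2 * K))) with e1 by (field; lra).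
    lra. }
  pose proof (jump_sum_le e1 e2 vm vp v ltac:(lra) He2 ltac:(lra) ltac:(lra)).
  assert (2 * e1 * ((v + vm) ^ 2 + (v + vp) ^ 2) / e2 <= 2 * e1 * K / e2).
  { apply Rmult_le_compat_r; [left; apply Rinv_0_lt_compat; lra | nra]. }
  lra.
Qed.

Lemma jump_sum_unbounded e1 e2 vm vp c v0 : 0 < e1 -> 0 <= e2 -> 0 < vm -> 0 < vp ->
  exists v, Rmax v0 vp < v /\ c < jump_sum e1 e2 vm vp v.
Proof.
  intros He1 He2 Hvm Hvp.
  pose proof (Rmax_r v0 vp).
  assert (Hs : 0 < sqrt e1) by (apply sqrt_lt_R0; exact He1).
  set (w := (Rabs c + e2) / (2 * sqrt e1)).
  assert (Hw : 2 * sqrt e1 * w = Rabs c + e2) by (unfold w; field; lra).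
  assert (0 <= w) by (apply Rdiv_le_0_compat; [pose proof (Rabs_pos c) |]; lra).
  exists (Rmax v0 vp + vm + w + 1). split; [lra |].
  pose proof (shock1_jump_ge e1 e2 vm (Rmax v0 vp + vm + w + 1) ltac:(lra) He2 ltac:(lra)).
  pose proof (shock2_jump_nonneg e1 e2 vp (Rmax v0 vp + vm + w + 1) ltac:(lra) He2 ltac:(lra)).
  pose proof (Rle_abs c).
  unfold jump_sum. nra.
Qed.

Lemma jump_sum_continuous e1 e2 vm vp v : 0 < e1 -> 0 < vm -> 0 < vp -> 0 < v ->
  continuity_pt (jump_sum e1 e2 vm vp) v.
Proof.
  intros He1 Hvm Hvp Hv.
  assert (Hd : ex_derive (jump_sum e1 e2 vm vp) v).
  { unfold jump_sum, shock1_jump, shock2_jump. auto_derive.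
    repeat split; try lra;
      (apply Rplus_le_lt_0_compat; [nra | apply Rmult_lt_0_compat; nra]). }
  apply continuity_pt_filterlim. exact (ex_derive_continuous _ _ Hd).
Qed.

Lemma jump_sum_attains e1 e2 vm vp c v0 : 0 < e1 -> 0 <= e2 -> 0 < vm -> 0 < vp -> 0 < v0 ->
  jump_sum e1 e2 vm vp v0 < c -> exists v, v0 < v /\ jump_sum e1 e2 vm vp v = c.
Proof.
  intros He1 He2 Hvm Hvp Hv0 Hlt.
  destruct (jump_sum_unbounded e1 e2 vm vp c v0 He1 He2 Hvm Hvp) as [v1 [Hv1 Hgt]].
  pose proof (Rmax_l v0 vp).
  destruct (IVT_interv (fun v => jump_sum e1 e2 vm vp v - c) v0 v1) as [v [[Hlo _] Hv]].
  - intros v Hv. apply continuity_pt_minus; [apply jump_sum_continuous; lra | apply continuity_pt_const; now intros ? ?].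
  - lra.
  - lra.
  - lra.
  - exists v. split; [| lra].
    destruct Hlo as [Hlo | <-]; [exact Hlo | lra].
Qed.

Lemma intermediate_state_jump_sum e1 e2 um vm up vp us vs : 0 < vm -> 0 < vp ->
  intermediate_state e1 e2 um vm up vp us vs -> jump_sum e1 e2 vm vp vs = um - up.
Proof.
  intros Hvm Hvp [Hv [_ [_ [Hus Hup]]]].
  pose proof (Rmax_l vm vp). pose proof (Rmax_r vm vp).
  unfold jump_sum, shock1_jump, shock2_jump. rewrite Hup, Hus. field. lra.
Qed.

Lemma jump_sum_intermediate_state e1 e2 um vm up vp vs : 0 < e1 -> 0 < e2 -> 0 < vm -> 0 < vp ->
  Rmax vm vp < vs -> jump_sum e1 e2 vm vp vs = um - up ->
  intermediate_state e1 e2 um vm up vp (um - shock1_jump e1 e2 vm vs) vs.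
Proof.
  intros He1 He2 Hvm Hvp Hv Hsum.
  pose proof (Rmax_l vm vp). pose proof (Rmax_r vm vp).
  pose proof (shock1_jump_pos e1 e2 vm vs He1 ltac:(lra) ltac:(lra)).
  pose proof (shock2_jump_pos e1 e2 vp vs ltac:(lra) He2 ltac:(lra)).
  unfold jump_sum in Hsum.
  repeat split; [lra | lra | lra | |].
  - unfold shock1_jump. field. lra.
  - assert (Hjump : (vp - vs) * (e2 + sqrt (e2 ^ 2 + 4 * e1 * (vs + vp) ^ 2)) / (vs + vp)
                     = - shock2_jump e1 e2 vp vs) by (unfold shock2_jump; field; lra).
    rewrite Hjump. lra.
Qed.

Theorem lemma6p1 (e2 um vm up vp : R) :
  0 < e2 -> 0 < vm -> 0 < vp -> up + 2 * e2 < um ->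
  (exists d, 0 < d /\ forall e1, 0 < e1 < d ->
     exists us vs, intermediate_state e1 e2 um vm up vp us vs) /\
  (forall M : R, exists d, 0 < d /\ forall e1 us vs, 0 < e1 < d ->
     intermediate_state e1 e2 um vm up vp us vs -> M < vs).
Proof.
  intros He2 Hvm Hvp Hu.
  pose proof (Rmax_l vm vp). pose proof (Rmax_r vm vp).
  split.
  - destruct (jump_sum_lt_eventually e2 vm vp (um - up) (Rmax vm vp) He2 Hvm Hvp ltac:(lra))
      as [d [Hd Hsmall]].
    exists d. split; [exact Hd |]. intros e1 He1.
    destruct (jump_sum_attains e1 e2 vm vp (um - up) (Rmax vm vp) ltac:(lra) ltac:(lra) Hvm Hvp
                ltac:(lra) (Hsmall e1 (Rmax vm vp) He1 ltac:(lra))) as [vs [Hvs Hsum]].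
    exists (um - shock1_jump e1 e2 vm vs), vs.
    exact (jump_sum_intermediate_state e1 e2 um vm up vp vs ltac:(lra) He2 Hvm Hvp Hvs Hsum).
  - intros M.
    destruct (jump_sum_lt_eventually e2 vm vp (um - up) (Rmax M (Rmax vm vp)) He2 Hvm Hvp ltac:(lra))
      as [d [Hd Hsmall]].
    exists d. split; [exact Hd |]. intros e1 us vs He1 Hstate.
    destruct (Rlt_le_dec M vs) as [HMv | HvM]; [exact HMv | exfalso].
    pose proof (intermediate_state_jump_sum e1 e2 um vm up vp us vs Hvm Hvp Hstate).
    destruct Hstate as [Hv _].
    pose proof (Rmax_l M (Rmax vm vp)).
    assert (jump_sum e1 e2 vm vp vs < um - up) by (apply Hsmall; lra).
    lra.
Qed.
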